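(* Let $D\ge 3$ and let $n\ge D+6$ be an even integer. Then topology recognition (even anonymous) is impossible, in any time, for the class of all graphs of size $n$ and diameter $D$ when all nodes receive the empty string as advice; that is, the size of advice needed to perform topology recognition for this class is at least $1$.
   Context: Graphs are finite, simple, undirected, connected, with no node labels; at each node of degree $d$ the incident edges carry distinct port numbers $0,\dots,d-1$ (no coherence between endpoints). Two such graphs are isomorphic if there is a bijection of nodes preserving edges and the port numbers at both endpoints of every edge. Communication model (LOCAL): synchronous rounds, all nodes start simultaneously; in each round every node may send arbitrary messages to all neighbours, receives their messages (knowing the arrival port), and performs arbitrary local computation. Initially a node knows only its degree and its advice. Advice: an oracle knowing the graph assigns each node a binary string; the size of advice is the maximum string length. All nodes run the same deterministic algorithm. Anonymous topology recognition: every node outputs a port-labeled graph isomorphic to $G$. A size $s$ of advice suffices for a class of graphs if there is a deterministic algorithm and, for each graph in the class, an advice assignment with strings of length at most $s$, such that the algorithm accomplishes the task on that graph. *)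

From mathcomp Require Import all_boot.
Set Implicit Arguments. Unset Strict Implicit. Unset Printing Implicit Defensive.

(* A port-labeled graph: nodes are 0, ..., pg_n - 1; pg_adj v lists the
   neighbours of v in port order: the edge at port i of v leads to
   nth 0 (pg_adj v) i.  The degree of v is size (pg_adj v). *)
Record PGraph := PG { pg_n : nat; pg_adj : nat -> seq nat }.

Fixpoint within (G : PGraph) (k v u : nat) : bool :=
  (u == v) ||
  (if k is k'.+1 then has (fun w => within G k' w u) (pg_adj G v) else false).

Definition valid_pgraph (G : PGraph) : Prop :=
  0 < pg_n G /\
  (forall v, v < pg_n G ->
     [/\ all (fun u => u < pg_n G) (pg_adj G v),
         uniq (pg_adj G v),
         v \notin pg_adj G v &
         forall u, u \in pg_adj G v -> v \in pg_adj G u]) /\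
  (forall u v, u < pg_n G -> v < pg_n G -> within G (pg_n G) u v).

Definition has_diameter (G : PGraph) (D : nat) : Prop :=
  (forall u v, u < pg_n G -> v < pg_n G -> within G D u v) /\
  (exists u v, [/\ u < pg_n G, v < pg_n G & ~~ within G D.-1 u v]).

(* isomorphism preserving edges and the port numbers at both endpoints *)
Definition pg_iso (G H : PGraph) : Prop :=
  pg_n G = pg_n H /\
  exists f : nat -> nat,
    [/\ forall v, v < pg_n G -> f v < pg_n G,
        forall u v, u < pg_n G -> v < pg_n G -> f u = f v -> u = v &
        forall v, v < pg_n G -> pg_adj H (f v) = map f (pg_adj G v)].

(* A deterministic algorithm in the LOCAL model, run identically by all nodes:
   states S, messages M; initial state from (degree, advice); in each round
   a node sends msg s p on its port p, and updates its state from the list of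
   received messages indexed by arrival port; out s = Some H means the node
   outputs H (the first time this happens counts as its output). *)
Record LocalAlg (S M : Type) := {
  la_init : nat -> seq bool -> S;
  la_msg : S -> nat -> M;
  la_step : S -> seq M -> S;
  la_out : S -> option PGraph }.

Fixpoint run (S M : Type) (A : LocalAlg S M) (G : PGraph)
    (adv : nat -> seq bool) (t : nat) : nat -> S :=
  match t with
  | 0 => fun v => la_init A (size (pg_adj G v)) (adv v)
  | t'.+1 => fun v =>
      let st := run A G adv t' in
      la_step A (st v)
        (map (fun u => la_msg A (st u) (index v (pg_adj G u))) (pg_adj G v))
  end.

Definition solves_TR (S M : Type) (A : LocalAlg S M) (G : PGraph)
    (adv : nat -> seq bool) : Prop :=
  forall v, v < pg_n G ->
    exists t H,
      [/\ la_out A (run A G adv t v) = Some H,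
          forall t', t' < t -> la_out A (run A G adv t' v) = None &
          pg_iso G H].

From mathcomp Require Import all_boot zify.

(* Write D = 2k + d with d = 1 if D is odd and d = 2 otherwise.  Both graphs
   are 2-lifts (double covers) of one port-labelled base graph on n/2 nodes: a
   hub on a triangle, a spine of length k, a gadget putting the two copies of
   the hub at distance d, and pendant leaves filling up the node count.  Two
   lifts of the same base graph are port-bisimilar, so with empty advice every
   node runs identically in both and the hub outputs the same graph at the same
   round in each.  The lift that keeps the triangle is not isomorphic to the
   one that twists a triangle edge across the sheets: the latter maps
   homomorphically onto the 5-cycle, hence has no triangle.  Both lifts have
   n nodes and diameter D: every node is within k of a copy of the hub, the
   hubs are at distance d, and a 1-Lipschitz potential puts the two spine ends
   at distance 2k + d. *)

Lemma eq_map_all2 (T1 T2 R : Type) (r : T1 -> T2 -> bool) (f : T1 -> R) (g : T2 -> R) s t :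
  all2 r s t -> (forall x y, r x y -> f x = g y) -> map f s = map g t.
Proof.
elim: s t => [|x s IH] [|y t] //= /andP [rxy rst] fg.
by rewrite (fg _ _ rxy) (IH _ rst fg).
Qed.

Lemma all2_map_sub (T1 T2 U1 U2 : Type) (r : T1 -> T2 -> bool) (r' : U1 -> U2 -> bool)
    (f : T1 -> U1) (g : T2 -> U2) s t :
  all2 r s t -> (forall x y, r x y -> r' (f x) (g y)) -> all2 r' (map f s) (map g t).
Proof.
elim: s t => [|x s IH] [|y t] //= /andP [rxy rst] rr'.
by rewrite rr' // IH.
Qed.

Lemma all2_diag (T : eqType) (r : T -> T -> bool) (s : seq T) :
  (forall e, e \in s -> r e e) -> all2 r s s.
Proof.
elim: s => //= e s IH r_diag; rewrite r_diag ?mem_head //.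
by apply: IH => e' e's; apply: r_diag; rewrite inE e's orbT.
Qed.

Lemma within_refl (G : PGraph) k u : within G k u u.
Proof. by case: k => [|k] /=; rewrite eqxx. Qed.

Lemma within_adj {G : PGraph} {u w} : w \in pg_adj G u -> within G 1 u w.
Proof. by move=> uw /=; apply/orP; right; apply/hasP; exists w; rewrite //= eqxx. Qed.

Lemma within0 {G : PGraph} {u v} : within G 0 u v -> v = u.
Proof. by rewrite /= orbF => /eqP. Qed.

Lemma withinS {G : PGraph} {k u v} : within G k.+1 u v ->
  v = u \/ exists2 w, w \in pg_adj G u & within G k w v.
Proof. by move=> /orP [/eqP|/hasP]; [left | right]. Qed.

Lemma within_mono {G : PGraph} {a b u v} : a <= b -> within G a u v -> within G b u v.
Proof.
elim: a b u => [|a IH] [|b] u // ab; first by move/within0 ->; apply: within_refl.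
move=> /withinS [->|[w uw wv]]; first exact: within_refl.
by apply/orP; right; apply/hasP; exists w => //; apply: IH wv.
Qed.

Lemma within_trans {G : PGraph} {a b u w v} :
  within G a u w -> within G b w v -> within G (a + b) u v.
Proof.
elim: a u => [|a IH] u; first by move/within0 ->.
move=> /withinS [-> wv|[z uz zw] wv]; first by apply: within_mono wv; lia.
by rewrite addSn; apply/orP; right; apply/hasP; exists z => //; apply: IH wv.
Qed.

Lemma within_sym {G : PGraph} {k u v} :
  (forall u w, w \in pg_adj G u -> u \in pg_adj G w) ->
  within G k u v -> within G k v u.
Proof.
move=> adj_sym; elim: k u => [|k IH] u; first by move/within0 ->; apply: within_refl.
move=> /withinS [->|[w uw wv]]; first exact: within_refl.
by rewrite -addn1; apply: within_trans (IH _ wv) (within_adj (adj_sym _ _ uw)).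
Qed.

Lemma within_lipschitz {G : PGraph} (l : nat -> nat) {k u v} :
  (forall u w, w \in pg_adj G u -> l w <= l u + 1) ->
  within G k u v -> l v <= l u + k.
Proof.
move=> l1; elim: k u => [|k IH] u; first by move/within0 ->; lia.
move=> /withinS [->|[w uw /IH]]; first lia.
by have := l1 _ _ uw; lia.
Qed.

Definition port_bisim (G1 G2 : PGraph) (R : rel nat) : Prop :=
  forall u1 u2, R u1 u2 ->
    all2 (fun w1 w2 => R w1 w2 && (index u1 (pg_adj G1 w1) == index u2 (pg_adj G2 w2)))
      (pg_adj G1 u1) (pg_adj G2 u2).

Lemma run_port_bisim {S M} (A : LocalAlg S M) {G1 G2 R adv1 adv2} :
  port_bisim G1 G2 R -> (forall u1 u2, R u1 u2 -> adv1 u1 = adv2 u2) ->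
  forall T u1 u2, R u1 u2 -> run A G1 adv1 T u1 = run A G2 adv2 T u2.
Proof.
move=> bisim adv_bisim; elim=> [|T IH] u1 u2 R12 /=.
  by have := bisim _ _ R12; rewrite all2E (adv_bisim _ _ R12) => /andP [/eqP -> _].
rewrite (IH _ _ R12); congr la_step.
apply: eq_map_all2 (bisim _ _ R12) _ => w1 w2 /andP [Rw /eqP ->].
by rewrite (IH _ _ Rw).
Qed.

Lemma solves_TR_port_bisim {S M} {A : LocalAlg S M} {G1 G2 R adv1 adv2 u1 u2} :
  port_bisim G1 G2 R -> (forall u1 u2, R u1 u2 -> adv1 u1 = adv2 u2) ->
  R u1 u2 -> u1 < pg_n G1 -> u2 < pg_n G2 ->
  solves_TR A G1 adv1 -> solves_TR A G2 adv2 -> exists H, pg_iso G1 H /\ pg_iso G2 H.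
Proof.
move=> bisim adv_bisim R12 u1_lt u2_lt sol1 sol2.
have same T := run_port_bisim A bisim adv_bisim T _ _ R12.
have [t1 [H1 [out1 before1 iso1]]] := sol1 _ u1_lt.
have [t2 [H2 [out2 before2 iso2]]] := sol2 _ u2_lt.
exists H1; split=> //.
case: (ltngtP t1 t2) => [lt|lt|eqt]; first by move: (before2 _ lt); rewrite -same out1.
  by move: (before1 _ lt); rewrite same out2.
by move: out2; rewrite -eqt -same out1 => -[->].
Qed.

Definition has_triangle (G : PGraph) : Prop :=
  exists u v w, [/\ u < pg_n G, v < pg_n G, w < pg_n G &
    [&& v \in pg_adj G u, w \in pg_adj G v & u \in pg_adj G w]].

Lemma inj_below_onto {n} {f : nat -> nat} :
  (forall v, v < n -> f v < n) -> (forall u v, u < n -> v < n -> f u = f v -> u = v) ->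
  forall {y}, y < n -> exists2 x, x < n & f x = y.
Proof.
move=> f_lt f_inj y y_lt.
have uniq_img : uniq (map f (iota 0 n)).
  by rewrite map_inj_in_uniq ?iota_uniq // => u v; rewrite !mem_iota; apply: f_inj.
have sub_img : {subset map f (iota 0 n) <= iota 0 n}.
  by move=> _ /mapP [x x_in ->]; move: x_in; rewrite !mem_iota => x_lt; apply: f_lt.
have [_ img] := uniq_min_size uniq_img sub_img (eq_leq (esym (size_map f _))).
have : y \in iota 0 n by rewrite mem_iota.
by rewrite -img => /mapP [x]; rewrite mem_iota => x_lt ->; exists x.
Qed.

Lemma pg_iso_has_triangle G H : pg_iso G H -> has_triangle G -> has_triangle H.
Proof.
move=> [nGH [f [f_lt _ f_adj]]] [u [v [w [u_lt v_lt w_lt /and3P [uv vw wu]]]]].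
exists (f u), (f v), (f w); rewrite -nGH !f_lt //.
by rewrite !f_adj // !map_f.
Qed.

Lemma pg_iso_has_triangle_inv G H :
  valid_pgraph G -> pg_iso G H -> has_triangle H -> has_triangle G.
Proof.
move=> [_ [G_ok _]] [nGH [f [f_lt f_inj f_adj]]] [a [b [c [a_lt b_lt c_lt abc]]]].
rewrite -nGH in a_lt b_lt c_lt.
have [u u_lt fu] := inj_below_onto f_lt f_inj a_lt.
have [v v_lt fv] := inj_below_onto f_lt f_inj b_lt.
have [w w_lt fw] := inj_below_onto f_lt f_inj c_lt.
rewrite -fu -fv -fw in abc.
have adj_back x y : x < pg_n G -> y < pg_n G -> f y \in pg_adj H (f x) -> y \in pg_adj G x.
  move=> x_lt y_lt; rewrite f_adj // => /mapP [z xz /f_inj -> //].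
  by have [/allP/(_ z xz) ? _ _ _] := G_ok x x_lt.
case/and3P: abc => uv vw wu.
by exists u, v, w; rewrite !adj_back.
Qed.

Definition cycle5_adj (a b : nat) : bool := (b == a.+1 %% 5) || (a == b.+1 %% 5).

Lemma cycle5_hom_triangle_free G (col : nat -> nat) :
  (forall u, col u < 5) ->
  (forall u v, u < pg_n G -> v \in pg_adj G u -> cycle5_adj (col u) (col v)) ->
  ~ has_triangle G.
Proof.
move=> col_lt hom [u [v [w [u_lt v_lt w_lt /and3P [uv vw wu]]]]].
move: (hom _ _ u_lt uv) (hom _ _ v_lt vw) (hom _ _ w_lt wu).
have := col_lt u; have := col_lt v; have := col_lt w; rewrite /cycle5_adj; lia.
Qed.

Definition lift_vertex (x : nat) (s : bool) : nat := s + x.*2.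

Lemma half_lift_vertex x s : (lift_vertex x s)./2 = x.
Proof. by rewrite /lift_vertex half_bit_double. Qed.

Lemma odd_lift_vertex x s : odd (lift_vertex x s) = s.
Proof. by rewrite /lift_vertex oddD odd_double addbF oddb. Qed.

Lemma lift_vertexK v : lift_vertex v./2 (odd v) = v.
Proof. exact: odd_double_half. Qed.

Lemma lift_vertex_lt x s m : x < m -> lift_vertex x s < m.*2.
Proof. by rewrite /lift_vertex; case: s => /=; lia. Qed.

Section TwoLift.

Variables (B : nat -> seq (nat * bool)) (m : nat).

(* Vertex x of the base in sheet s is s + 2x; an entry (y, c) of the base
   adjacency list of x is an edge to y that changes sheet iff c. *)
Definition dart_end (s : bool) (e : nat * bool) : nat := lift_vertex e.1 (s (+) e.2).

Definition two_lift : PGraph := PG m.*2 (fun v => map (dart_end (odd v)) (B v./2)).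

Lemma dart_end_inj s : injective (dart_end s).
Proof.
move=> [y c] [y' c'] eq_end.
have := congr1 half eq_end; have := congr1 odd eq_end.
by rewrite /dart_end /= !half_lift_vertex 2!odd_lift_vertex => /addbI -> ->.
Qed.

Lemma dart_end_flip s y c : dart_end s (y, s (+) c) = lift_vertex y c.
Proof. by rewrite /dart_end addKb. Qed.

Lemma two_lift_adj x s : pg_adj two_lift (lift_vertex x s) = map (dart_end s) (B x).
Proof. by rewrite /= half_lift_vertex odd_lift_vertex. Qed.

Lemma two_lift_adjP u w : w \in pg_adj two_lift u ->
  exists2 e, e \in B u./2 & w = lift_vertex e.1 (odd u (+) e.2).
Proof. by move/mapP. Qed.

Lemma mem_two_lift_adj x s y c :
  (lift_vertex y c \in pg_adj two_lift (lift_vertex x s)) = ((y, s (+) c) \in B x).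
Proof. by rewrite two_lift_adj -(dart_end_flip s y c) (mem_map (dart_end_inj s)). Qed.

Lemma index_two_lift_adj x s y c :
  index (lift_vertex x s) (pg_adj two_lift (lift_vertex y c)) = index (x, s (+) c) (B y).
Proof. by rewrite two_lift_adj -(dart_end_flip c x s) (index_map (dart_end_inj c)) addbC. Qed.

Lemma two_lift_sym : (forall x e, e \in B x -> (x, e.2) \in B e.1) ->
  forall u w, w \in pg_adj two_lift u -> u \in pg_adj two_lift w.
Proof.
move=> B_sym u w /two_lift_adjP [e Be ->].
by rewrite -[u in u \in _]lift_vertexK mem_two_lift_adj addbC addKb B_sym.
Qed.

Lemma two_lift_valid :
  0 < m ->
  (forall x e, x < m -> e \in B x -> e.1 < m) ->
  (forall x, uniq (B x)) ->
  (forall x, (x, false) \notin B x) ->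
  (forall x e, e \in B x -> (x, e.2) \in B e.1) ->
  (forall u v, u < m.*2 -> v < m.*2 -> within two_lift m.*2 u v) ->
  valid_pgraph two_lift.
Proof.
move=> m_gt0 B_lt B_uniq B_loopfree B_sym conn.
split; first by rewrite /= double_gt0.
split=> // v v_lt; split.
- apply/allP => _ /two_lift_adjP [e Be ->]; apply: lift_vertex_lt.
  by apply: B_lt Be; rewrite ltn_half_double.
- by rewrite map_inj_uniq ?B_uniq //; exact: dart_end_inj.
- by rewrite -{1 2}(lift_vertexK v) mem_two_lift_adj addbb B_loopfree.
- exact: two_lift_sym.
Qed.

End TwoLift.

Lemma two_lift_port_bisim {B1 B2 m} :
  (forall x, all2 (fun e1 e2 => (e1.1 == e2.1) &&
       (index (x, e1.2) (B1 e1.1) == index (x, e2.2) (B2 e2.1))) (B1 x) (B2 x)) ->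
  port_bisim (two_lift B1 m) (two_lift B2 m) (fun u1 u2 => u1./2 == u2./2).
Proof.
move=> B12 u1 u2 /eqP u12.
rewrite -(lift_vertexK u1) -(lift_vertexK u2) !two_lift_adj u12.
apply: all2_map_sub (B12 _) _ => e1 e2 /andP [/eqP e12 /eqP idx].
by rewrite /dart_end !half_lift_vertex !index_two_lift_adj !addKb idx e12 !eqxx.
Qed.

Section Construction.

Variables (k m : nat) (p : bool).
Hypotheses (k_gt0 : 0 < k) (km : k + 4 <= m).

(* Base nodes: 0 is the hub, 0-1-2 the triangle (edge 2-0 changes sheet iff
   t), 3 is pendant if p (the two hubs are then adjacent) and otherwise the
   middle of a path joining them, 4, ..., k + 3 is the spine and
   k + 4, ..., m - 1 are leaves. *)
Definition leaves : seq (nat * bool) := [seq (y, false) | y <- iota (k + 4) (m - (k + 4))].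

Definition base (t : bool) (x : nat) : seq (nat * bool) :=
  if x == 0 then
    [:: (1, false), (2, t), (3, false), (if p then (0, true) else (3, true)),
        (4, false) & leaves]
  else if x == 1 then [:: (0, false); (2, false)]
  else if x == 2 then [:: (1, false); (0, t)]
  else if x == 3 then (if p then [:: (0, false)] else [:: (0, false); (0, true)])
  else if x < k + 4 then
    (if x == 4 then 0 else x.-1, false) ::
      (if x.+1 < k + 4 then [:: (x.+1, false)] else [::])
  else if x < m then [:: (0, false)]
  else [::].

Lemma mem_leaves e : (e \in leaves) = ~~ e.2 && (k + 4 <= e.1 < m).
Proof.
case: e => y c /=; apply/mapP/idP => [[z]|/andP [c_false y_in]].
  by rewrite mem_iota => z_in [-> ->] /=; lia.
by exists y; [rewrite mem_iota; lia | move: c_false; case: c].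
Qed.

Variant base_node_spec (x : nat) : Prop :=
| BaseHub of x = 0
| BaseTri1 of x = 1
| BaseTri2 of x = 2
| BaseGadget of x = 3
| BaseSpine of 4 <= x < k + 4
| BaseLeaf of k + 4 <= x < m
| BaseOut of m <= x.

Lemma base_nodeP x : base_node_spec x.
Proof.
case: x => [|[|[|[|x]]]]; [exact: BaseHub|exact: BaseTri1|exact: BaseTri2|exact: BaseGadget|].
case: (ltnP x.+4 (k + 4)) => [x_lt|x_ge]; first exact: BaseSpine.
by case: (ltnP x.+4 m) => x_m; [apply: BaseLeaf; lia | exact: BaseOut].
Qed.

Section Sheet.

Variable t : bool.

Lemma base0 : base t 0 =
  [:: (1, false), (2, t), (3, false), (if p then (0, true) else (3, true)),
      (4, false) & leaves].
Proof. by []. Qed.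

Lemma base1 : base t 1 = [:: (0, false); (2, false)].
Proof. by []. Qed.

Lemma base2 : base t 2 = [:: (1, false); (0, t)].
Proof. by []. Qed.

Lemma base3 : base t 3 = (if p then [:: (0, false)] else [:: (0, false); (0, true)]).
Proof. by []. Qed.

Lemma base_spine x : 4 <= x < k + 4 ->
  base t x = (if x == 4 then 0 else x.-1, false) ::
    (if x.+1 < k + 4 then [:: (x.+1, false)] else [::]).
Proof. by case: x => [|[|[|[|x]]]] // /andP [_ x_lt]; rewrite /base /= x_lt. Qed.

Lemma base_leaf x : k + 4 <= x < m -> base t x = [:: (0, false)].
Proof.
case: x => [|[|[|[|x]]]] /andP [x_ge x_lt]; try lia.
by rewrite /base /= ltnNge x_ge x_lt.
Qed.

Lemma base_out x : m <= x -> base t x = [::].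
Proof.
case: x => [|[|[|[|x]]]] x_ge; try lia; rewrite /base /=.
have -> : (x.+4 < k + 4) = false by lia.
by rewrite ltnNge x_ge.
Qed.

Lemma base_lt x e : e \in base t x -> e.1 < m.
Proof.
case: (base_nodeP x) => [->|->|->|->|x_in|x_in|x_ge].
- rewrite base0 !inE mem_leaves; case: p => /=;
    by move=> /or3P [/eqP->|/eqP->|/or3P [/eqP->|/eqP->|/orP [/eqP->|/and3P [_ _ ->]]]] //=; lia.
- by rewrite base1 !inE => /orP [] /eqP-> /=; lia.
- by rewrite base2 !inE => /orP [] /eqP-> /=; lia.
- rewrite base3; case: p; rewrite !inE ?orbF; first by move=> /eqP-> /=; lia.
  by move=> /orP [] /eqP-> /=; lia.
- rewrite base_spine // inE => /orP [/eqP->|] /=; first by case: ifP; lia.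
  by case: ifP => // x_lt; rewrite inE => /eqP-> /=; lia.
- by rewrite base_leaf // inE => /eqP-> /=; lia.
- by rewrite base_out.
Qed.

Lemma base_uniq x : uniq (base t x).
Proof.
case: (base_nodeP x) => [->|->|->|->|x_in|x_in|x_ge].
- have leaves_uniq : uniq leaves by rewrite map_inj_uniq ?iota_uniq // => y z [].
  rewrite base0 /= !inE !mem_leaves leaves_uniq andbT.
  by case: p; case: t => /=; lia.
- by rewrite base1.
- by rewrite base2; case: t.
- by rewrite base3; case: p.
- by rewrite base_spine //=; do 2 case: ifP => ? //=; rewrite ?inE ?xpair_eqE; lia.
- by rewrite base_leaf.
- by rewrite base_out.
Qed.

Lemma base_loopfree x : (x, false) \notin base t x.
Proof.
case: (base_nodeP x) => [->|->|->|->|x_in|x_in|x_ge].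
- by rewrite base0 !inE mem_leaves /=; case: p; case: t => /=; lia.
- by rewrite base1.
- by rewrite base2; case: t.
- by rewrite base3; case: p.
- rewrite base_spine // in_cons negb_or xpair_eqE andbT.
  by do 2 case: ifP => _; rewrite ?inE ?xpair_eqE ?andbT; lia.
- by rewrite base_leaf // inE xpair_eqE /= andbT; lia.
- by rewrite base_out.
Qed.

Lemma base_sym x e : e \in base t x -> (x, e.2) \in base t e.1.
Proof.
case: (base_nodeP x) => [->|->|->|->|/andP [x_ge x_lt]|x_in|x_ge].
- rewrite base0 !inE mem_leaves.
  move=> /or3P [/eqP->|/eqP->|/or3P [/eqP->|/eqP->|/orP [/eqP->|/and3P [e2 e1_ge e1_lt]]]].
  + by [].
  + by rewrite base2 !inE eqxx orbT.
  + by rewrite /= base3; case: p; rewrite !inE.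
  + by case: ifP => p_val; rewrite /= ?base0 ?base3 p_val !inE.
  + by rewrite /= base_spine //=; lia.
  + by rewrite base_leaf ?e1_ge // inE; case: e e2 {e1_ge e1_lt} => ? [].
- by rewrite base1 !inE => /orP [] /eqP-> /=; rewrite ?base0 ?base2 !inE ?eqxx ?orbT.
- by rewrite base2 !inE => /orP [] /eqP-> /=; rewrite ?base0 ?base1 !inE ?eqxx ?orbT.
- rewrite base3; case: ifP => p_val; rewrite !inE ?orbF.
    by move=> /eqP->; rewrite /= base0 p_val !inE ?eqxx ?orbT.
  by move=> /orP [] /eqP->; rewrite /= base0 p_val !inE ?eqxx ?orbT.
- rewrite base_spine ?x_ge // inE => /orP [/eqP->|] /=.
  + case: ifP => [/eqP->|x_ne4]; first by rewrite base0 !inE eqxx !orbT.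
    rewrite base_spine; last by lia.
    by rewrite prednK ?x_lt ?inE ?eqxx ?orbT; lia.
  + case: ifP => // x1_lt; rewrite inE => /eqP-> /=.
    rewrite base_spine; last by lia.
    have -> : (x.+1 == 4) = false by lia.
    by rewrite inE eqxx.
- by rewrite base_leaf // inE => /eqP-> /=; rewrite base0 !inE mem_leaves /= x_in !orbT.
- by rewrite base_out.
Qed.

Definition hub_dist : nat := if p then 1 else 2.

Local Notation G := (two_lift (base t) m).

Lemma base_adj_sym u w : w \in pg_adj G u -> u \in pg_adj G w.
Proof. exact: two_lift_sym base_sym u w. Qed.

Lemma spine_within_hub s i : 0 < i <= k -> within G i (lift_vertex (i + 3) s) (lift_vertex 0 s).
Proof.
elim: i => [|[|i] IH] // i_le.
  by apply: within_adj; rewrite mem_two_lift_adj addbb base_spine //; lia.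
have step : within G 1 (lift_vertex (i.+2 + 3) s) (lift_vertex (i.+1 + 3) s).
  apply: within_adj; rewrite mem_two_lift_adj addbb base_spine; last by lia.
  by rewrite inE; apply/orP; left; apply/eqP; congr pair; case: ifP; lia.
by apply: within_trans step (IH _); lia.
Qed.

Lemma within_hub {u} : u < m.*2 -> exists s, within G k u (lift_vertex 0 s).
Proof.
rewrite -ltn_half_double => x_lt; rewrite -(lift_vertexK u).
set x := u./2 in x_lt *; set s := odd u.
have near_hub c : (0, c) \in base t x -> within G k (lift_vertex x s) (lift_vertex 0 (s (+) c)).
  by move=> x0; apply: (within_mono k_gt0); apply: within_adj; rewrite mem_two_lift_adj addKb.
case: (base_nodeP x) => [x0|x1|x2|x3|x_in|x_in|]; last by lia.
- by exists s; rewrite x0; apply: within_refl.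
- by exists (s (+) false); apply: near_hub; rewrite x1.
- by exists (s (+) t); apply: near_hub; rewrite x2 base2 !inE eqxx orbT.
- by exists (s (+) false); apply: near_hub; rewrite x3 base3; case: (p).
- exists s; have := spine_within_hub s (x - 3); rewrite subnK; last by lia.
  by move=> spine; apply: within_mono (spine _); lia.
- by exists (s (+) false); apply: near_hub; rewrite base_leaf // inE.
Qed.

Lemma hubs_within s1 s2 : within G hub_dist (lift_vertex 0 s1) (lift_vertex 0 s2).
Proof.
wlog [-> ->] : s1 s2 / s1 = false /\ s2 = true.
  move=> wlog; case: s1; case: s2; try exact: within_refl.
    by apply: within_sym base_adj_sym _; apply: wlog.
  exact: wlog.
rewrite /hub_dist; case: ifP => p_val.
  by apply: within_adj; rewrite mem_two_lift_adj base0 p_val !inE eqxx !orbT.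
have hub_gadget s c : within G 1 (lift_vertex 0 s) (lift_vertex 3 (s (+) c)).
  apply: within_adj; rewrite mem_two_lift_adj base0 p_val addKb !inE.
  by case: c; rewrite eqxx !orbT.
exact: within_trans (hub_gadget false true) (within_sym base_adj_sym (hub_gadget true false)).
Qed.

Lemma base_within {u v} : u < m.*2 -> v < m.*2 -> within G (k + hub_dist + k) u v.
Proof.
move=> u_lt v_lt.
have [s1 u_hub] := within_hub u_lt; have [s2 v_hub] := within_hub v_lt.
apply: within_trans (within_trans u_hub (hubs_within s1 s2)) _.
exact: within_sym base_adj_sym v_hub.
Qed.

Lemma base_valid : valid_pgraph G.
Proof.
apply: two_lift_valid; first by lia.
- by move=> x e _; apply: base_lt.
- exact: base_uniq.
- exact: base_loopfree.
- exact: base_sym.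
- move=> u v u_lt v_lt; apply: within_mono (base_within u_lt v_lt).
  by rewrite /hub_dist; case: (p); lia.
Qed.

Definition level (x : nat) (s : bool) : nat :=
  if 4 <= x < k + 4 then (if s then k + hub_dist + (x - 3) else k - (x - 3))
  else if ((x == 2) || (x == 3)) && ~~ p then k + 1
  else k + (if s then hub_dist else 0).

Ltac level_cases := rewrite /level /hub_dist /=; repeat (case: ifP => /= ?); lia.

Lemma base_level x s e : e \in base t x -> level e.1 (s (+) e.2) <= level x s + 1.
Proof.
case: (base_nodeP x) => [->|->|->|->|x_in|x_in|x_ge].
- rewrite base0 !inE mem_leaves.
  move=> /or3P [/eqP->|/eqP->|/or3P [/eqP->|/eqP->|/orP [/eqP->|/and3P [e2 e1_ge e1_lt]]]];
    [ by case: s; case: t; level_cases.. |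
      by case: ifP => p_val /=; case: s; rewrite /level /hub_dist p_val; level_cases |
      by case: s; level_cases |
      by move: e2 e1_ge e1_lt; case: e => y [] //= _ y_ge y_lt; case: s; level_cases ].
- by rewrite base1 !inE => /orP [] /eqP->; case: s; level_cases.
- by rewrite base2 !inE => /orP [] /eqP->; case: s; case: t; level_cases.
- rewrite base3; case: ifP => p_val; rewrite !inE ?orbF.
    by move=> /eqP->; case: s; rewrite /level /hub_dist p_val; level_cases.
  by move=> /orP [] /eqP->; case: s; rewrite /level /hub_dist p_val; level_cases.
- rewrite base_spine // inE => /orP [/eqP->|].
    by case: ifP => [/eqP->|x_ne4] /=; case: s; level_cases.
  by case: ifP => // x1_lt; rewrite inE => /eqP->; case: s; level_cases.
- by rewrite base_leaf // inE => /eqP->; case: s; level_cases.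
- by rewrite base_out.
Qed.

Lemma two_lift_level u w :
  w \in pg_adj G u -> level w./2 (odd w) <= level u./2 (odd u) + 1.
Proof.
move=> /two_lift_adjP [e Be ->].
by rewrite half_lift_vertex odd_lift_vertex; apply: base_level.
Qed.

Lemma spine_ends_far :
  ~~ within G (k + hub_dist + k).-1 (lift_vertex (k + 3) false) (lift_vertex (k + 3) true).
Proof.
apply/negP => /(within_lipschitz _ two_lift_level).
rewrite !half_lift_vertex !odd_lift_vertex /level /hub_dist.
by case: ifP; case: ifP; lia.
Qed.

Lemma base_diameter : has_diameter G (k + hub_dist + k).
Proof.
split; first by move=> u v; apply: base_within.
exists (lift_vertex (k + 3) false), (lift_vertex (k + 3) true).
by split; rewrite ?lift_vertex_lt ?spine_ends_far //; lia.
Qed.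

End Sheet.

(* A homomorphism onto the 5-cycle of the lift twisted at the triangle edge,
   whose hub, 1, 2, hub', 1', 2' form a hexagon coloured 0 4 0 1 2 1 (if p). *)
Definition color (x : nat) (s : bool) : nat :=
  let hub := if s then (if p then 1 else 2) else 0 in
  if x == 0 then hub
  else if x == 1 then (if p then (if s then 2 else 4) else (if s then 3 else 4))
  else if x == 2 then (if p then (if s then 1 else 0) else (if s then 4 else 3))
  else if x == 3 then (if p then hub + 1 else 1)
  else if x < k + 4 then (if odd (x - 3) then hub + 1 else hub)
  else hub + 1.

Lemma color_lt x s : color x s < 5.
Proof. by rewrite /color; case: s; repeat (case: ifP => _); lia. Qed.

Ltac color_cases := rewrite /cycle5_adj /color /=; repeat (case: ifP => /= ?); lia.

Lemma base_color x s e : e \in base true x -> cycle5_adj (color x s) (color e.1 (s (+) e.2)).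
Proof.
case: (base_nodeP x) => [->|->|->|->|x_in|x_in|x_ge].
- rewrite base0 !inE mem_leaves.
  move=> /or3P [/eqP->|/eqP->|/or3P [/eqP->|/eqP->|/orP [/eqP->|/and3P [e2 e1_ge e1_lt]]]];
    [ by case: s; color_cases.. |
      by case: ifP => p_val /=; case: s; rewrite /color p_val; color_cases |
      by case: s; color_cases |
      by move: e2 e1_ge e1_lt; case: e => y [] //= _ y_ge y_lt; case: s; color_cases ].
- by rewrite base1 !inE => /orP [] /eqP->; case: s; color_cases.
- by rewrite base2 !inE => /orP [] /eqP->; case: s; color_cases.
- rewrite base3; case: ifP => p_val; rewrite !inE ?orbF.
    by move=> /eqP->; case: s; rewrite /color p_val; color_cases.
  by move=> /orP [] /eqP->; case: s; rewrite /color p_val; color_cases.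
- rewrite base_spine // inE => /orP [/eqP->|].
    by case: ifP => [/eqP->|x_ne4] /=; case: s; color_cases.
  by case: ifP => // x1_lt; rewrite inE => /eqP->; case: s; color_cases.
- by rewrite base_leaf // inE => /eqP->; case: s; color_cases.
- by rewrite base_out.
Qed.

Lemma twisted_triangle_free : ~ has_triangle (two_lift (base true) m).
Proof.
apply: (cycle5_hom_triangle_free _ (fun v => color v./2 (odd v))) => [u|u w _].
  exact: color_lt.
move=> /two_lift_adjP [e Be ->].
by rewrite half_lift_vertex odd_lift_vertex; apply: base_color.
Qed.

Lemma untwisted_triangle : has_triangle (two_lift (base false) m).
Proof.
exists (lift_vertex 0 false), (lift_vertex 1 false), (lift_vertex 2 false).
by split; rewrite ?lift_vertex_lt ?mem_two_lift_adj //; lia.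
Qed.

Lemma base_twist_indep t1 t2 {x} : x != 0 -> x != 2 -> base t1 x = base t2 x.
Proof. by move=> x_ne0 x_ne2; rewrite /base (negbTE x_ne0) (negbTE x_ne2). Qed.

Lemma index_base_twist_indep t1 t2 x c y : x != 0 -> x != 2 ->
  index (x, c) (base t1 y) = index (x, c) (base t2 y).
Proof.
move=> x_ne0 x_ne2; case: (eqVneq y 0) => [->|y_ne0].
  by rewrite !base0 /= !xpair_eqE; have -> : (2 == x) = false by lia.
case: (eqVneq y 2) => [->|y_ne2]; last by rewrite (base_twist_indep t1 t2 y_ne0 y_ne2).
by rewrite !base2 /= !xpair_eqE; have -> : (0 == x) = false by lia.
Qed.

Lemma base_port_bisim t1 t2 x :
  all2 (fun e1 e2 => (e1.1 == e2.1) &&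
      (index (x, e1.2) (base t1 e1.1) == index (x, e2.2) (base t2 e2.1)))
    (base t1 x) (base t2 x).
Proof.
case: (eqVneq x 0) => [->|x_ne0].
  rewrite !base0 /= !eqxx ?(base_twist_indep t1 t2 (x := 4)) //.
  set hub_edge := if p then _ else _.
  have -> : index (0, hub_edge.2) (base t1 hub_edge.1) = index (0, hub_edge.2) (base t2 hub_edge.1).
    by rewrite /hub_edge; case: ifP => _ //=; rewrite !base0.
  rewrite !eqxx /=; apply: all2_diag => _ /mapP [y y_in ->] /=.
  by rewrite eqxx (base_twist_indep t1 t2 (x := y)) //; move: y_in; rewrite mem_iota; lia.
case: (eqVneq x 2) => [->|x_ne2].
  by rewrite !base2 /= !eqxx.
rewrite (base_twist_indep t1 t2 x_ne0 x_ne2); apply: all2_diag => e _.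
by rewrite eqxx (index_base_twist_indep t1 t2) // eqxx.
Qed.

End Construction.

Theorem proposition3p2 (D n : nat) :
  3 <= D -> D + 6 <= n -> ~~ odd n ->
  forall (S M : Type) (A : LocalAlg S M),
  ~ (forall G : PGraph, valid_pgraph G -> pg_n G = n -> has_diameter G D ->
       solves_TR A G (fun _ => [::])).
Proof.
move=> D_ge n_ge n_even S M A solves.
pose k := D.-1./2; pose m := n./2; pose p := odd D.
have k_gt0 : 0 < k by rewrite /k; lia.
have km : k + 4 <= m by rewrite /k /m; lia.
have mn : m.*2 = n by rewrite /m; lia.
have kD : k + hub_dist p + k = D by rewrite /hub_dist /k /p; case: ifP; lia.
have solves_base t : solves_TR A (two_lift (base k m p t) m) (fun _ => [::]).
  by apply: solves; [exact: base_valid | exact: mn | rewrite -kD; exact: base_diameter].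
have n_gt0 : 0 < m.*2 by lia.
have [H [iso_untwisted iso_twisted]] :=
  solves_TR_port_bisim (u1 := 0) (u2 := 0)
    (two_lift_port_bisim (base_port_bisim _ _ _ k_gt0 km false true))
    (fun _ _ _ => erefl [::]) (eqxx 0) n_gt0 n_gt0 (solves_base false) (solves_base true).
apply: (twisted_triangle_free _ _ _ k_gt0 km).
apply: pg_iso_has_triangle_inv (base_valid _ _ _ k_gt0 km true) iso_twisted _.
exact: pg_iso_has_triangle iso_untwisted (untwisted_triangle _ _ _ k_gt0 km).
Qed.
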